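(* (i) For every integer $k\ge1$, $\alpha_{\mathrm{od}}(Q_{4k})\ge2\sum_{i=1}^{k}\binom{4k-1}{2i-1}$. (ii) $\alpha_{\mathrm{od}}(Q_4)=6$, $\alpha_{\mathrm{od}}(Q_6)=24$, and $\alpha_{\mathrm{od}}(Q_8)=112$. (iii) For every even $d\ge8$, $\alpha_{\mathrm{od}}(Q_d)\ge\frac{7}{16}\cdot2^d$.
   Context: $Q_d$ is the $d$-dimensional hypercube: vertex set $\{0,1\}^d$, two vertices adjacent iff they differ in exactly one coordinate. An odd independent set in $G=(V,E)$ is an independent set $S$ such that every $v\in V\setminus S$ has either no neighbor or an odd number of neighbors in $S$; $\alpha_{\mathrm{od}}(G)$ is its maximum size. *)

From mathcomp Require Import all_boot.
Set Implicit Arguments. Unset Strict Implicit. Unset Printing Implicit Defensive.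

Section OddIndep.
Variables (T : finType) (e : rel T).

Definition nbrs_in (S : {set T}) (v : T) : {set T} := [set u in S | e v u].

Definition independent (S : {set T}) : bool :=
  [forall u in S, forall v in S, ~~ e u v].

Definition odd_independent (S : {set T}) : bool :=
  independent S &&
  [forall v in ~: S, (#|nbrs_in S v| == 0) || odd #|nbrs_in S v|].

Definition alpha_od : nat := \max_(S : {set T} | odd_independent S) #|S|.
End OddIndep.

Definition cube (d : nat) := {ffun 'I_d -> bool}.
Definition cube_adj (d : nat) : rel (cube d) :=
  fun x y => #|[set i : 'I_d | x i != y i]| == 1.

Definition alpha_od_Q (d : nat) : nat := @alpha_od (cube d) (@cube_adj d).

(* Let S be odd independent in a d-regular graph, d even, in which every path
   t - u - y with y <> t lies on a 4-cycle, as in Q_d.  A vertex outside S has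
   0 or an odd number of neighbours in S; call it isolated in the first case
   and saturated if it has d - 1.  Every other vertex outside S has at most
   d - 3 neighbours in S, so double counting the edges leaving S gives
   d |S| <= (d - 3) (|~S| - #isolated) + 2 #saturated, and every saturated
   vertex is adjacent to an isolated one.  If each isolated vertex has at most
   m saturated neighbours, this yields (m + 1) d |S| <= m (d - 1) |~S|.  With
   m = d we get alpha_od(Q_4) <= 6 and alpha_od(Q_8) <= 112; with m = 3 we get
   alpha_od(Q_6) <= 24, the other case (an isolated vertex with four saturated
   neighbours and |S| >= 25) being ruled out by an exhaustive search.
   For the lower bounds, explicit sets in Q_4 and Q_8 are checked by
   computation, and the map Q_(n+2) -> Q_n that forgets the two last
   coordinates and flips a fixed coordinate when they differ pulls odd
   independent sets back to odd independent sets four times larger.  This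
   gives (iii) by induction from Q_8, and (i) follows from (iii) for k >= 2
   since the binomial sum is at most 7/32 2^(4k). *)

From Stdlib Require Import PeanoNat.
From mathcomp Require Import all_boot zify.
Set Implicit Arguments. Unset Strict Implicit. Unset Printing Implicit Defensive.

(** * Odd independent sets in regular graphs *)

Section OddIndependent.
Variables (T : finType) (e : rel T).

Lemma card_set_in_sum (A : {set T}) (P : pred T) :
  #|[set u in A | P u]| = \sum_(u in A) P u.
Proof. by rewrite -sum1dep_card big_mkcondr; apply: eq_bigr => u _; case: (P u). Qed.

Lemma odd_independentP S : odd_independent e S <->
  (forall x, x \in S -> #|nbrs_in e S x| = 0) /\
  (forall x, x \notin S -> #|nbrs_in e S x| = 0 \/ odd #|nbrs_in e S x|).
Proof.
have nbrs0P x : reflect (forall y, y \in S -> ~~ e x y) (#|nbrs_in e S x| == 0).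
  rewrite cards_eq0; apply: (iffP eqP) => [/setP S0 y yS|noS].
    by move: (S0 y); rewrite !inE yS /= => ->.
  by apply/setP => y; rewrite !inE; apply/negbTE/andP => -[/noS/negP].
rewrite /odd_independent /independent; split.
- case/andP => /forall_inP indS /forall_inP outS; split => [x xS|x xS].
    by apply/eqP/nbrs0P => y; move/forall_inP: (indS x xS); apply.
  by move: (outS x); rewrite inE xS => /(_ isT) /orP[/eqP|]; [left|right].
- case=> inS outS; apply/andP; split; apply/forall_inP => x xS.
    by apply/forall_inP => y; apply/nbrs0P/eqP/inS.
  by rewrite inE in xS; case: (outS x xS) => ->; rewrite ?orbT.
Qed.

Lemma odd_independent_adj S x y :
  odd_independent e S -> x \in S -> e x y -> y \notin S.
Proof.
case/odd_independentP => inS _ xS exy.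
move/eqP: (inS x xS); rewrite cards_eq0 => /eqP/setP/(_ y).
by rewrite !inE exy andbT => ->.
Qed.

Lemma card_le_alpha_od S : odd_independent e S -> #|S| <= alpha_od e.
Proof. exact: (leq_bigmax_cond (F := fun S : {set T} => #|S|)). Qed.

Lemma alpha_od_le m :
  (forall S, odd_independent e S -> #|S| <= m) -> alpha_od e <= m.
Proof. by move=> Sm; apply/bigmax_leqP => S /Sm. Qed.

Section Regular.
Variable d : nat.
Hypothesis e_sym : symmetric e.
Hypothesis e_regular : forall x, #|[set y | e x y]| = d.
Hypothesis e_square : forall t u y, e t u -> e u y -> y != t ->
  exists2 w, e t w & e w y && (w != u).

(* Since d is even, d.-1 is the largest odd number of neighbours in S a
   vertex can have. *)
Definition isolated S := [set t in ~: S | #|nbrs_in e S t| == 0].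
Definition saturated S := [set t in ~: S | #|nbrs_in e S t| == d.-1].

Lemma isolated_adj S z y : z \in isolated S -> e z y -> y \notin S.
Proof.
rewrite !inE cards_eq0 => /andP[_ /eqP/setP/(_ y)].
by rewrite !inE => + ezy; rewrite ezy andbT => ->.
Qed.

Variable S : {set T}.
Hypothesis S_oddind : odd_independent e S.

Lemma card_nbrs_in_le x : #|nbrs_in e S x| <= d.
Proof.
by rewrite -(e_regular x) subset_leq_card //; apply/subsetP => y; rewrite !inE => /andP[].
Qed.

Lemma sum_card_nbrs_in_compl : \sum_(t in ~: S) #|nbrs_in e S t| = d * #|S|.
Proof.
under eq_bigr => t _ do rewrite card_set_in_sum.
rewrite exchange_big /= mulnC -sum_nat_const; apply: eq_bigr => u uS.
rewrite -card_set_in_sum -(e_regular u); apply: eq_card => t.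
rewrite !inE e_sym; case eut: (e u t); rewrite ?andbF ?andbT //.
exact: odd_independent_adj S_oddind uS eut.
Qed.

Hypotheses (d_even : ~~ odd d) (d_ge4 : 3 < d).

Lemma card_nbrs_in_compl_le t : t \notin S ->
  #|nbrs_in e S t| + (d - 3) * (t \in isolated S) <= (d - 3) + 2 * (t \in saturated S).
Proof.
move=> tS; rewrite !inE tS /=.
have [_ /(_ t tS) nbrs_odd] := (odd_independentP S).1 S_oddind.
move: (card_nbrs_in_le t) nbrs_odd; move: #|_| => k le_kd [->|odd_k].
  by rewrite eqxx muln1; case: eqP; lia.
have := odd_double_half k; have := odd_double_half d.
rewrite odd_k (negbTE d_even) /=; case: eqP; case: eqP; lia.
Qed.

Lemma card_isolated_saturated_le :
  d * #|S| + (d - 3) * #|isolated S| <= (d - 3) * #|~: S| + 2 * #|saturated S|.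
Proof.
have sub_compl (A : {set T}) : A \subset ~: S -> \sum_(t in ~: S) (t \in A) = #|A|.
  by move=> AS; rewrite -card_set_in_sum -{2}(setIidPr AS).
have iso_sub : isolated S \subset ~: S by apply/subsetP => t; rewrite inE => /andP[].
have sat_sub : saturated S \subset ~: S by apply/subsetP => t; rewrite inE => /andP[].
rewrite -sum_card_nbrs_in_compl -(sub_compl _ iso_sub) -(sub_compl _ sat_sub).
rewrite [X in _ <= X + _]mulnC -sum_nat_const !big_distrr -!big_split /=.
by apply: leq_sum => t; rewrite inE; exact: card_nbrs_in_compl_le.
Qed.

Lemma card_nbrs_notin_saturated t : t \in saturated S -> #|[set y | e t y] :\: S| = 1.
Proof.
rewrite !inE => /andP[_ /eqP nbrs_t]; have := cardsID S [set y | e t y].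
suff -> : #|[set y | e t y] :&: S| = d.-1.
  by rewrite e_regular -{2}(ltn_predK d_ge4) -addn1 => /addnI.
by rewrite -nbrs_t; apply: eq_card => y; rewrite !inE andbC.
Qed.

Lemma saturated_adj_in t u w : t \in saturated S ->
  e t u -> u \notin S -> e t w -> w != u -> w \in S.
Proof.
move=> /card_nbrs_notin_saturated nbrs_t etu uS etw wu; apply: contraT => wS.
have : [set u; w] \subset [set y | e t y] :\: S.
  by apply/subsetP => x; rewrite !inE => /orP[] /eqP ->; rewrite ?etu ?uS ?etw ?wS.
by move/subset_leq_card; rewrite nbrs_t cards2 eq_sym wu.
Qed.

Lemma saturated_adj_isolated t :
  t \in saturated S -> exists2 u, e t u & u \in isolated S.
Proof.
move=> t_sat; have /card_gt0P[u] : 0 < #|[set y | e t y] :\: S|.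
  by rewrite card_nbrs_notin_saturated.
rewrite !inE => /andP[uS etu]; exists u => //; rewrite !inE uS cards_eq0 /=.
apply/eqP/setP => y; rewrite !inE; apply/negbTE/andP => -[yS euy].
have yt : y != t by apply: contraTneq yS => ->; move: t_sat; rewrite !inE => /andP[].
have [w etw /andP[ewy wu]] := e_square etu euy yt.
have wS := saturated_adj_in t_sat etu uS etw wu.
by move: (odd_independent_adj S_oddind wS ewy); rewrite yS.
Qed.

Lemma card_saturated_le :
  #|saturated S| <= \sum_(z in isolated S) #|[set t in saturated S | e z t]|.
Proof.
rewrite -sum1_card.
apply: (@leq_trans (\sum_(t in saturated S) \sum_(z in isolated S) e t z)).
  apply: leq_sum => t /saturated_adj_isolated[u etu uZ].
  by rewrite (bigD1 u) //= etu.
rewrite exchange_big /=; apply: leq_sum => z _; rewrite card_set_in_sum.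
by apply/eq_leq/eq_bigr => t _; rewrite e_sym.
Qed.

Lemma card_saturated_isolated_le : #|saturated S| + #|isolated S| <= #|~: S|.
Proof.
rewrite -cardsUI; have -> : saturated S :&: isolated S = set0.
  have d1_gt0 : 0 < d.-1 by rewrite ltn_predRL (ltn_trans _ d_ge4).
  apply/setP => t; rewrite !inE; apply/negbTE/andP => -[/andP[_ /eqP ->] /andP[_]].
  by rewrite (gtn_eqF d1_gt0).
rewrite cards0 addn0 subset_leq_card //; apply/subsetP => t.
by rewrite !inE => /orP[] /andP[].
Qed.

Lemma odd_independent_card_le m : d - 3 <= 2 * m ->
  (forall z, z \in isolated S -> #|[set t in saturated S | e z t]| <= m) ->
  m.+1 * d * #|S| <= m * d.-1 * #|~: S|.
Proof.
move=> dm sat_m.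
have sat_le : #|saturated S| <= m * #|isolated S|.
  rewrite mulnC -sum_nat_const; apply: leq_trans card_saturated_le _.
  exact: leq_sum.
have d_eq : d = (d - 3) + 3 by lia.
move: d_eq card_isolated_saturated_le sat_le card_saturated_isolated_le dm.
move: (d - 3) #|S| #|~: S| #|saturated S| #|isolated S| => D s t f z -> hA hB hC.
rewrite addn3 /= => /subnK hb.
(* The weights m.+1, D + 2 and 2m - D on the three inequalities cancel f and z. *)
have h1 := leq_mul (leqnn m.+1) hA.
have h2 := leq_mul (leqnn (D + 2)) hB.
have h3 := leq_mul (leqnn (2 * m - D)) hC.
have ef : 2 * m * f = (2 * m - D) * f + D * f by rewrite -mulnDl hb.
have ez : 2 * m * z = (2 * m - D) * z + D * z by rewrite -mulnDl hb.
have et : 2 * m * t = (2 * m - D) * t + D * t by rewrite -mulnDl hb.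
lia.
Qed.

End Regular.
End OddIndependent.

(** * The hypercube *)

Section Cube.
Variable d : nat.

Definition flip (x : cube d) (i : 'I_d) : cube d :=
  [ffun j => if j == i then ~~ x j else x j].

Lemma flip_inj x : injective (flip x).
Proof.
move=> i j /ffunP/(_ i); rewrite !ffunE eqxx.
by case: eqVneq => // _; case: (x i).
Qed.

Lemma flipC x i j : flip (flip x i) j = flip (flip x j) i.
Proof. by apply/ffunP => k; rewrite !ffunE; case: (k == i); case: (k == j). Qed.

Lemma flipK x i : flip (flip x i) i = x.
Proof. by apply/ffunP => k; rewrite !ffunE; case: eqP => // _; rewrite negbK. Qed.

Lemma cube_adjP (x y : cube d) : reflect (exists i, y = flip x i) (cube_adj x y).
Proof.
apply: (iffP cards1P) => [[i /setP xy_i]|[i ->]]; exists i.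
  apply/ffunP => j; rewrite ffunE; move: (xy_i j); rewrite !inE.
  case: (eqVneq j i) => [-> | _] xy; last by apply/esym/eqP/negbFE.
  by case: (x i) (y i) xy => -[].
apply/setP => j; rewrite !inE !ffunE.
by case: (eqVneq j i) => [->|_]; rewrite ?eqxx //; case: (x i).
Qed.

Lemma cube_adj_sym : symmetric (@cube_adj d).
Proof.
by move=> x y; apply/cube_adjP/cube_adjP => -[i ->]; exists i; rewrite flipK.
Qed.

Lemma card_cube_nbrs_in (A : {set cube d}) x :
  #|[set y in A | cube_adj x y]| = \sum_(i < d) (flip x i \in A).
Proof.
have -> : [set y in A | cube_adj x y] = flip x @: [set i | flip x i \in A].
  apply/setP => y; rewrite inE; apply/andP/imsetP => [[yA /cube_adjP[i y_i]]|[i]].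
    by exists i; rewrite // inE -y_i.
  by rewrite inE => iA ->; split => //; apply/cube_adjP; exists i.
rewrite card_imset; last exact: flip_inj.
by rewrite -sum1dep_card big_mkcond; apply: eq_bigr => i _; case: (_ \in A).
Qed.

Lemma card_cube_nbrs (x : cube d) : #|[set y | cube_adj x y]| = d.
Proof.
have -> : [set y | cube_adj x y] = flip x @: setT.
  by apply/setP => y; rewrite inE; apply/cube_adjP/imsetP => [[i ->]|[i _ ->]]; exists i.
by rewrite card_imset ?cardsT ?card_ord //; exact: flip_inj.
Qed.

Lemma cube_adj_square (t u y : cube d) : cube_adj t u -> cube_adj u y -> y != t ->
  exists2 w, cube_adj t w & cube_adj w y && (w != u).
Proof.
case/cube_adjP => i -> /cube_adjP[j ->] yt.
have ji : j != i by apply: contraNneq yt => ->; rewrite flipK.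
exists (flip t j); first by apply/cube_adjP; exists j.
apply/andP; split; first by apply/cube_adjP; exists i; rewrite flipC.
by apply: contra ji => /eqP/flip_inj ->.
Qed.

Lemma card_cube : #|cube d| = 2 ^ d.
Proof. by rewrite card_ffun card_bool card_ord. Qed.

Lemma card_odd_independent_cube_le (S : {set cube d}) : ~~ odd d -> 3 < d ->
  odd_independent (@cube_adj d) S -> 2 * d * #|S| <= d.-1 * 2 ^ d.
Proof.
move=> d_even d_ge4 S_oddind.
have := odd_independent_card_le cube_adj_sym card_cube_nbrs cube_adj_square
  S_oddind d_even d_ge4 (m := d) ltac:(lia) (fun z _ => card_nbrs_in_le card_cube_nbrs _ z).
rewrite -card_cube -(cardsC S); move: #|S| #|~: S| => s t; nia.
Qed.

Lemma saturated_flip_flip (S : {set cube d}) z i j : 3 < d ->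
  z \in isolated (@cube_adj d) S -> flip z i \in saturated (@cube_adj d) d S ->
  j != i -> flip (flip z i) j \in S.
Proof.
move=> d_ge4 z_iso zi_sat ji.
apply: (saturated_adj_in card_cube_nbrs d_ge4 zi_sat (u := z)).
- by apply/cube_adjP; exists i; rewrite flipK.
- by move: z_iso; rewrite inE => /andP[]; rewrite inE.
- by apply/cube_adjP; exists j.
- apply: contra ji => /eqP/(congr1 (flip^~ i)).
  by rewrite flipC !flipK => /flip_inj ->.
Qed.

End Cube.

Lemma alpha_od_Q_le d : ~~ odd d -> 3 < d -> 2 * d * alpha_od_Q d <= d.-1 * 2 ^ d.
Proof.
move=> d_even d_ge4; apply: (big_ind (fun a => 2 * d * a <= d.-1 * 2 ^ d)).
- by rewrite muln0.
- by move=> a b; rewrite /maxn; case: ifP.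
- by move=> S; apply: card_odd_independent_cube_le.
Qed.

(** * Lifting from Q_n to Q_(n+2) *)

Section Lift.
Variables (n : nat) (i0 : 'I_n).

Definition low (x : cube (n + 2)) : cube n := [ffun i => x (lshift 2 i)].
Definition high (x : cube (n + 2)) : cube 2 := [ffun k => x (rshift n k)].
Definition join (u : cube n) (h : cube 2) : cube (n + 2) :=
  [ffun j => match split j with inl i => u i | inr k => h k end].

Definition twist (h : cube 2) (u : cube n) :=
  if h ord0 != h ord_max then flip u i0 else u.

(* Flipping either of the two new coordinates flips coordinate i0 of the
   projection, so each neighbour of [proj x] in direction i0 is seen twice. *)
Definition proj (x : cube (n + 2)) : cube n := twist (high x) (low x).
Definition unproj (p : cube n * cube 2) : cube (n + 2) := join (twist p.2 p.1) p.2.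

Lemma low_join u h : low (join u h) = u.
Proof. by apply/ffunP => i; rewrite !ffunE (unsplitK (inl i)). Qed.

Lemma high_join u h : high (join u h) = h.
Proof. by apply/ffunP => k; rewrite !ffunE (unsplitK (inr k)). Qed.

Lemma join_low_high x : join (low x) (high x) = x.
Proof.
apply/ffunP => j; rewrite !ffunE; case: splitP => [i|k] j_eq; rewrite ffunE;
  by congr (x _); apply: val_inj.
Qed.

Lemma twistK h : involutive (twist h).
Proof. by move=> u; rewrite /twist; case: (_ != _); rewrite ?flipK. Qed.

Lemma proj_unproj p : proj (unproj p) = p.1.
Proof. by rewrite /proj /unproj low_join high_join twistK. Qed.

Lemma unproj_inj : injective unproj.
Proof.
move=> [u1 h1] [u2 h2] eq12; have := congr1 proj eq12; have := congr1 high eq12.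
by rewrite !proj_unproj /unproj !high_join /= => -> ->.
Qed.

Lemma rshift_eq_lshift (i : 'I_n) (k : 'I_2) : (rshift n k == lshift 2 i) = false.
Proof. by apply/negbTE; rewrite -val_eqE /=; have := ltn_ord i; lia. Qed.

Lemma proj_flip_low x i : proj (flip x (lshift 2 i)) = flip (proj x) i.
Proof.
rewrite /proj; have -> : low (flip x (lshift 2 i)) = flip (low x) i.
  by apply/ffunP => j; rewrite !ffunE (inj_eq (@lshift_inj _ _)).
have -> : high (flip x (lshift 2 i)) = high x.
  by apply/ffunP => k; rewrite !ffunE rshift_eq_lshift.
by rewrite /twist; case: ifP => // _; rewrite flipC.
Qed.

Lemma proj_flip_high x k : proj (flip x (rshift n k)) = flip (proj x) i0.
Proof.
rewrite /proj; have -> : low (flip x (rshift n k)) = low x.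
  by apply/ffunP => i; rewrite !ffunE eq_sym rshift_eq_lshift.
have -> : high (flip x (rshift n k)) = flip (high x) k.
  by apply/ffunP => j; rewrite !ffunE (inj_eq (@rshift_inj _ _)).
have [->|->] : k = ord0 \/ k = ord_max by case: k => -[|[|]] // ?; [left|right]; apply: val_inj.
all: by rewrite /twist !ffunE /=; do 2 case: (_ x _) => /=; rewrite ?flipK.
Qed.

Variable S : {set cube n}.

Lemma card_nbrs_in_preimset x :
  #|nbrs_in (@cube_adj (n + 2)) (proj @^-1: S) x| =
  #|nbrs_in (@cube_adj n) S (proj x)| + 2 * (flip (proj x) i0 \in S).
Proof.
rewrite /nbrs_in !card_cube_nbrs_in big_split_ord /=.
under eq_bigr => i _ do rewrite inE proj_flip_low.
under [X in _ + X = _]eq_bigr => k _ do rewrite inE proj_flip_high.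
by rewrite sum_nat_const card_ord.
Qed.

Lemma odd_independent_preimset :
  odd_independent (@cube_adj n) S -> odd_independent (@cube_adj (n + 2)) (proj @^-1: S).
Proof.
move=> /odd_independentP[inS outS].
have no_flip y : #|nbrs_in (@cube_adj n) S y| = 0 -> flip y i0 \notin S.
  rewrite /nbrs_in card_cube_nbrs_in (bigD1 i0) //=.
  by apply: contra_eqN => ->.
apply/odd_independentP; split => x; rewrite inE => x_in; rewrite card_nbrs_in_preimset.
  by rewrite (inS _ x_in) (negbTE (no_flip _ (inS _ x_in))).
case: (outS _ x_in) => [nbrs0|nbrs_odd].
  by left; rewrite nbrs0 (negbTE (no_flip _ nbrs0)).
by right; rewrite oddD nbrs_odd oddM.
Qed.

Lemma card_preimset_proj : #|proj @^-1: S| = 4 * #|S|.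
Proof.
have -> : proj @^-1: S = unproj @: setX S setT.
  apply/setP => x; rewrite inE; apply/idP/imsetP => [xS|[[u h]]].
    exists (proj x, high x); first by rewrite in_setX xS in_setT.
    by rewrite /unproj /proj twistK join_low_high.
  by rewrite in_setX in_setT andbT /= => uS ->; rewrite proj_unproj.
by rewrite card_imset ?cardsX ?cardsT ?card_cube 1?mulnC //; exact: unproj_inj.
Qed.

End Lift.

Lemma alpha_od_Q_lift n : 0 < n -> 4 * alpha_od_Q n <= alpha_od_Q (n + 2).
Proof.
move=> n_gt0; apply: (big_ind (fun a => 4 * a <= alpha_od_Q (n + 2))) => //.
- by move=> a b; rewrite /maxn; case: ifP.
- move=> S /(odd_independent_preimset (Ordinal n_gt0)) S'_oddind.
  by rewrite -(card_preimset_proj (Ordinal n_gt0)); exact: card_le_alpha_od.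
Qed.

(** * Vertex sets as predicates on binary codes *)

Lemma sum_ord_count n (P : pred nat) : \sum_(i < n) P i = count P (iota 0 n).
Proof.
elim: n => [|n IHn]; first by rewrite big_ord0.
by rewrite big_ord_recr IHn -[in RHS]addn1 iotaD count_cat /= add0n addn0.
Qed.

Lemma Nat_pow2E n : Nat.pow 2 n = 2 ^ n.
Proof. by elim: n => // n IHn; rewrite expnS -IHn. Qed.

Section BitVectors.
Variable d : nat.

Definition cube_of_nat (v : nat) : cube d := [ffun i : 'I_d => Nat.testbit v i].
Definition weight (v : nat) := count (Nat.testbit v) (iota 0 d).
Definition nbr_codes (v : nat) : seq nat := map (fun i => Nat.lxor v (2 ^ i)) (iota 0 d).

Lemma flip_cube_of_nat v (i : 'I_d) :
  flip (cube_of_nat v) i = cube_of_nat (Nat.lxor v (2 ^ i)).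
Proof.
apply/ffunP => j; rewrite !ffunE Nat.lxor_spec -Nat_pow2E Nat.pow2_bits_eqb.
case: (eqVneq j i) => [->|ji]; first by rewrite Nat.eqb_refl; case: Nat.testbit.
suff -> : (i =? j) = false by rewrite Bool.xorb_false_r.
by apply/Nat.eqb_neq => /val_inj ij; rewrite ij eqxx in ji.
Qed.

Lemma mod_pow2_lt w : w mod 2 ^ d < 2 ^ d.
Proof. by apply/ltP/Nat.mod_upper_bound; rewrite -Nat_pow2E; apply: Nat.pow_nonzero. Qed.

Lemma cube_of_nat_mod v : cube_of_nat (v mod 2 ^ d) = cube_of_nat v.
Proof.
by apply/ffunP => i; rewrite !ffunE -Nat_pow2E Nat.mod_pow2_bits_low //; apply/ltP.
Qed.

Lemma cube_of_nat_inj v w : v < 2 ^ d -> w < 2 ^ d ->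
  cube_of_nat v = cube_of_nat w -> v = w.
Proof.
move=> /ltP v_lt /ltP w_lt /ffunP vw; apply: Nat.bits_inj => n.
case: (ltnP n d) => [n_lt | /leP n_ge]; first by move: (vw (Ordinal n_lt)); rewrite !ffunE.
rewrite -Nat_pow2E in v_lt w_lt.
rewrite -(Nat.mod_small _ _ v_lt) -(Nat.mod_small _ _ w_lt).
by rewrite !Nat.mod_pow2_bits_high.
Qed.

Lemma cube_of_nat_uniq : uniq [seq cube_of_nat v | v <- iota 0 (2 ^ d)].
Proof.
rewrite map_inj_in_uniq ?iota_uniq // => v w; rewrite !mem_iota /=.
exact: cube_of_nat_inj.
Qed.

Lemma cube_of_nat_surj (x : cube d) : exists2 v, v < 2 ^ d & cube_of_nat v = x.
Proof.
suff : x \in [seq cube_of_nat v | v <- iota 0 (2 ^ d)].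
  by case/mapP => v; rewrite mem_iota => /andP[_ v_lt] ->; exists v.
have card_codes : #|[seq cube_of_nat v | v <- iota 0 (2 ^ d)]| = #|cube d|.
  by rewrite (card_uniqP cube_of_nat_uniq) size_map size_iota card_cube.
by rewrite (subset_cardP card_codes (subset_predT _)).
Qed.

Lemma card_cube_count (A : {set cube d}) :
  #|A| = count (fun v => cube_of_nat v \in A) (iota 0 (2 ^ d)).
Proof.
rewrite -(count_map cube_of_nat (mem A)) -size_filter.
rewrite -(card_uniqP (filter_uniq _ cube_of_nat_uniq)).
apply: eq_card => x; rewrite mem_filter andbC.
by have [v v_lt <-] := cube_of_nat_surj x; rewrite map_f ?mem_iota ?v_lt.
Qed.

Lemma card_nbrs_in_count (A : {set cube d}) v :
  #|nbrs_in (@cube_adj d) A (cube_of_nat v)| =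
  count (fun w => cube_of_nat w \in A) (nbr_codes v).
Proof.
rewrite card_cube_nbrs_in count_map.
under eq_bigr => i _ do rewrite flip_cube_of_nat.
exact: (sum_ord_count d (fun i => cube_of_nat (Nat.lxor v (2 ^ i)) \in A)).
Qed.

Lemma cube_of_nat_lxor v w :
  cube_of_nat (Nat.lxor v w) = [ffun i => cube_of_nat v i (+) cube_of_nat w i].
Proof. by apply/ffunP => i; rewrite !ffunE Nat.lxor_spec; do 2 case: Nat.testbit. Qed.

Lemma count_lxor (A : {set cube d}) w :
  count (fun v => cube_of_nat (Nat.lxor v w) \in A) (iota 0 (2 ^ d)) = #|A|.
Proof.
pose tr (x : cube d) : cube d := [ffun i => x i (+) cube_of_nat w i].
have tr_inj : injective tr.
  by move=> x y /ffunP xy; apply/ffunP => i; move: (xy i); rewrite !ffunE => /addIb.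
rewrite -(card_preimset A tr_inj) card_cube_count.
by apply: eq_count => v; rewrite inE cube_of_nat_lxor.
Qed.

Lemma nbr_codes_lxor v w : nbr_codes (Nat.lxor v w) = map (Nat.lxor^~ w) (nbr_codes v).
Proof.
rewrite /nbr_codes -map_comp; apply: eq_map => i /=.
by rewrite !Nat.lxor_assoc (Nat.lxor_comm w).
Qed.

Definition odd_independent_at (s : pred nat) v :=
  let k := count s (nbr_codes v) in if s v then k == 0 else (k == 0) || odd k.

Lemma odd_independent_at_lxor (S : {set cube d}) w :
  odd_independent (@cube_adj d) S ->
  forall v, odd_independent_at (fun u => cube_of_nat (Nat.lxor u w) \in S) v.
Proof.
case/odd_independentP => inS outS v; rewrite /odd_independent_at.
have -> : count (fun u => cube_of_nat (Nat.lxor u w) \in S) (nbr_codes v) =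
          #|nbrs_in (@cube_adj d) S (cube_of_nat (Nat.lxor v w))|.
  by rewrite card_nbrs_in_count nbr_codes_lxor count_map.
case: ifP => [/inS -> // | /negbT/outS[-> // | ->]]; exact: orbT.
Qed.

(* Neighbour codes of v < 2 ^ d are themselves below 2 ^ d; reducing them
   mod 2 ^ d merely spares proving it. *)
Definition odd_independent_code (s : pred nat) : bool :=
  all (odd_independent_at (fun w => s (w mod 2 ^ d))) (iota 0 (2 ^ d)).

Lemma odd_independent_code_alpha_od s :
  odd_independent_code s -> count s (iota 0 (2 ^ d)) <= alpha_od_Q d.
Proof.
move=> /allP s_ok.
pose S := [set cube_of_nat v | v : 'I_(2 ^ d) & s v].
have mod_id v : v < 2 ^ d -> v mod 2 ^ d = v.
  by move=> /ltP v_lt; apply: Nat.mod_small.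
have in_S w : (cube_of_nat w \in S) = s (w mod 2 ^ d).
  apply/imsetP/idP => [[v] | sw].
    rewrite inE -cube_of_nat_mod => sv /cube_of_nat_inj eq_v.
    by rewrite eq_v ?mod_pow2_lt.
  by exists (Ordinal (mod_pow2_lt w)); rewrite ?inE ?cube_of_nat_mod.
have S_oddind : odd_independent (@cube_adj d) S.
  apply/odd_independentP; split => x; have [v v_lt <-] := cube_of_nat_surj x;
    rewrite card_nbrs_in_count (eq_count in_S) in_S;
    move: (s_ok v); rewrite mem_iota v_lt /odd_independent_at mod_id // => /(_ isT).
    by move=> + sv; rewrite sv => /eqP.
  by move=> + /negbTE sv; rewrite sv => /orP[/eqP|]; [left|right].
apply: leq_trans (card_le_alpha_od S_oddind).
rewrite card_imset; last by move=> v w /(cube_of_nat_inj (ltn_ord v) (ltn_ord w))/val_inj.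
rewrite -sum1dep_card -sum_ord_count [X in _ <= X]big_mkcond.
by apply/eq_leq/eq_bigr => v _; case: (s v).
Qed.

End BitVectors.

(** * The exhaustive search for Q_6 *)

Section Search.
Variable d : nat.

(* In a partial assignment, [Some b] at position v decides whether code v is
   in the set. *)
Definition assigned (a : seq (option bool)) v := nth None a v.

Definition locally_ok (a : seq (option bool)) w : bool :=
  match assigned a w with
  | Some true => all (fun u => assigned a u != Some true) (nbr_codes d w)
  | Some false =>
      all (fun u => assigned a u != None) (nbr_codes d w) ==>
      let k := count (fun u => assigned a u == Some true) (nbr_codes d w) in
      (k == 0) || odd k
  | None => true
  end.

Definition consistent a v := locally_ok a v && all (locally_ok a) (nbr_codes d v).

Definition may_reach tgt (a : seq (option bool)) :=
  tgt <= count (fun o => o != Some false) a.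

Fixpoint search tgt (order : seq nat) a : bool :=
  if order is v :: order' then
    if assigned a v is Some _ then search tgt order' a else
    let extend b := let a' := set_nth None a v (Some b) in
      if consistent a' v && may_reach tgt a' then search tgt order' a' else false in
    extend true || extend false
  else true.

Variable s : pred nat.
Hypothesis s_oddind : forall v, odd_independent_at d s v.

Definition agrees a := forall v b, assigned a v = Some b -> s v = b.

Lemma locally_ok_agrees a w : agrees a -> locally_ok a w.
Proof.
rewrite /locally_ok => s_a; case a_w: (assigned a w) => [[]|] //; have := s_oddind w;
  rewrite /odd_independent_at (s_a _ _ a_w).
  rewrite eqn0Ngt -has_count => /hasPn no_nbr; apply/allP => u /no_nbr s_u.
  by apply: contraNneq s_u => /s_a ->.
move=> k_ok; apply/implyP => /allP all_assigned.
rewrite (@eq_in_count _ _ s) //= => u /all_assigned.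
by case a_u: (assigned a u) => [b|] // _; rewrite (s_a _ _ a_u); case: b a_u.
Qed.

Lemma consistent_agrees a v : agrees a -> consistent a v.
Proof.
move=> s_a; rewrite /consistent locally_ok_agrees //.
by apply/allP => u _; apply: locally_ok_agrees.
Qed.

Lemma agrees_set_nth a v : agrees a -> agrees (set_nth None a v (Some (s v))).
Proof.
by move=> s_a u b; rewrite /assigned nth_set_nth /=; case: eqP => [-> [] | _ /s_a].
Qed.

Lemma may_reach_agrees tgt a :
  agrees a -> tgt <= count s (iota 0 (size a)) -> may_reach tgt a.
Proof.
move=> s_a tgt_le; rewrite /may_reach -(mkseq_nth None a) /mkseq count_map.
apply: (leq_trans tgt_le); apply: sub_count => v /= sv; apply/eqP => /s_a.
by rewrite sv.
Qed.

Lemma search_complete tgt N order a :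
  tgt <= count s (iota 0 N) -> agrees a -> size a = N -> all (gtn N) order ->
  search tgt order a.
Proof.
move=> tgt_le; elim: order a => [|v order IH] a //= s_a size_a /andP[v_lt order_lt].
case: (assigned a v) => [_|]; first exact: IH.
set a' := set_nth None a v (Some (s v)).
have size_a' : size a' = N by rewrite size_set_nth size_a; apply/maxn_idPr.
have s_a' : agrees a' := agrees_set_nth (v := v) s_a.
have extend_sv : if consistent a' v && may_reach tgt a' then search tgt order a' else false.
  by rewrite consistent_agrees // may_reach_agrees ?size_a' // IH.
by rewrite /a' in extend_sv; case: (s v) extend_sv => ->; rewrite ?orbT.
Qed.

End Search.

Definition assign_all (a : seq (option bool)) (L : seq (nat * bool)) :=
  foldl (fun a p => set_nth None a p.1 (Some p.2)) a L.

Lemma assigned_assign_all a L v b : assigned (assign_all a L) v = Some b ->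
  (v, b) \in L \/ assigned a v = Some b.
Proof.
elim: L a => [|[w c] L IHL] a /=; first by right.
case/IHL => [vb_L|]; first by left; rewrite in_cons vb_L orbT.
rewrite /assigned nth_set_nth /=; case: eqP => [-> [<-]|_ ->]; last by right.
by left; rewrite in_cons eqxx.
Qed.

Definition subsets4 : seq (seq nat) :=
  [:: [:: 0; 1; 2; 3]; [:: 0; 1; 2; 4]; [:: 0; 1; 2; 5]; [:: 0; 1; 3; 4];
      [:: 0; 1; 3; 5]; [:: 0; 1; 4; 5]; [:: 0; 2; 3; 4]; [:: 0; 2; 3; 5];
      [:: 0; 2; 4; 5]; [:: 0; 3; 4; 5]; [:: 1; 2; 3; 4]; [:: 1; 2; 3; 5];
      [:: 1; 2; 4; 5]; [:: 1; 3; 4; 5]; [:: 2; 3; 4; 5]].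

Lemma has_subsets4 (P : pred nat) : 3 < count P (iota 0 6) -> has (all P) subsets4.
Proof.
by rewrite /=; case: (P 0); case: (P 1); case: (P 2); case: (P 3); case: (P 4); case: (P 5).
Qed.

(* 0 is isolated, the unit vectors 2 ^ i are outside the set, and for i in J
   the unit vector 2 ^ i is saturated, which forces all its other neighbours in. *)
Definition Q6_start (J : seq nat) : seq (option bool) :=
  assign_all (nseq 64 None)
    ((0, false) :: [seq (2 ^ i, false) | i <- iota 0 6] ++
     flatten [seq [seq (Nat.lxor (2 ^ i) (2 ^ j), true) | j <- iota 0 6 & j != i] | i <- J]).

Definition Q6_order : seq nat :=
  flatten [seq [seq v <- iota 0 64 | weight 6 v == k] | k <- iota 0 7].

Lemma Q6_search_fails : all (fun J => ~~ search 6 25 Q6_order (Q6_start J)) subsets4.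
Proof. by vm_compute. Qed.

Lemma size_Q6_start : all (fun J => size (Q6_start J) == 64) subsets4.
Proof. by vm_compute. Qed.

Lemma Q6_order_lt : all (gtn 64) Q6_order.
Proof. by vm_compute. Qed.

Lemma Q6_code_bound (s : pred nat) : (forall v, odd_independent_at 6 s v) ->
  ~~ s 0 -> (forall i, i < 6 -> ~~ s (2 ^ i)) ->
  3 < count (fun i => all (fun j => (j == i) || s (Nat.lxor (2 ^ i) (2 ^ j))) (iota 0 6))
            (iota 0 6) ->
  count s (iota 0 64) <= 24.
Proof.
move=> s_oddind s0 s_unit /has_subsets4/hasP[J J_sub /allP J_sat].
have s_start : agrees s (Q6_start J).
  move=> v b /assigned_assign_all[|]; last by rewrite /assigned nth_nseq; case: ifP.
  rewrite in_cons mem_cat => /or3P[/eqP[-> ->] | /mapP[i] | /flattenP[_ /mapP[i iJ ->]]].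
  - exact: negbTE.
  - by rewrite mem_iota => /andP[_ i_lt] [-> ->]; apply/negbTE/s_unit.
  - case/mapP => j; rewrite mem_filter => /andP[ji j_lt] [-> ->].
    by move/allP: (J_sat i iJ) => /(_ j j_lt); rewrite (negbTE ji).
rewrite leqNgt; apply/negP => s_big.
have := search_complete s_oddind s_big s_start (eqP (allP size_Q6_start J J_sub)) Q6_order_lt.
by rewrite (negbTE (allP Q6_search_fails J J_sub)).
Qed.

Lemma Q6_isolated_with_saturated_nbrs (S : {set cube 6}) :
  odd_independent (@cube_adj 6) S -> 24 < #|S| ->
  exists2 z, z \in isolated (@cube_adj 6) S &
             3 < #|[set t in saturated (@cube_adj 6) 6 S | cube_adj z t]|.
Proof.
move=> S_oddind S_big; apply/exists_inP; move: S_big; apply: contraTT.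
rewrite negb_exists_in -leqNgt => /forall_inP sat_gt.
have sat_le z : z \in isolated (@cube_adj 6) S ->
    #|[set t in saturated (@cube_adj 6) 6 S | cube_adj z t]| <= 3.
  by rewrite leqNgt; apply: sat_gt.
have := odd_independent_card_le (@cube_adj_sym 6) (@card_cube_nbrs 6) (@cube_adj_square 6)
  S_oddind isT isT (m := 3) isT sat_le.
move=> S_bound; have card_S : #|S| + #|~: S| = 64 by rewrite cardsC card_cube.
by move: S_bound card_S; move: #|S| #|~: S| => s t; lia.
Qed.

Lemma card_odd_independent_Q6_le (S : {set cube 6}) :
  odd_independent (@cube_adj 6) S -> #|S| <= 24.
Proof.
move=> S_oddind; rewrite leqNgt; apply/negP => S_big.
have [z z_iso z_sat] := Q6_isolated_with_saturated_nbrs S_oddind S_big.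
have [z0 _ z0E] := cube_of_nat_surj z.
have flipE (i : 'I_6) : cube_of_nat 6 (Nat.lxor (2 ^ i) z0) = flip z i.
  by rewrite Nat.lxor_comm -flip_cube_of_nat z0E.
suff : #|S| <= 24 by rewrite leqNgt S_big.
rewrite -(count_lxor S z0); apply: Q6_code_bound.
- exact: odd_independent_at_lxor.
- by rewrite Nat.lxor_0_l z0E; move: z_iso; rewrite !inE => /andP[].
- move=> i i_lt; rewrite (flipE (Ordinal i_lt)).
  by apply: isolated_adj z_iso _; apply/cube_adjP; exists (Ordinal i_lt).
- rewrite card_cube_nbrs_in in z_sat; apply: leq_trans z_sat _.
  rewrite -sum_ord_count; apply: leq_sum => i _.
  have [zi_sat|] := boolP (flip z i \in saturated (@cube_adj 6) 6 S); last by [].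
  rewrite lt0b; apply/allP => j; rewrite mem_iota => /andP[_ j_lt].
  case: eqVneq => //= ji; rewrite Nat.lxor_assoc (Nat.lxor_comm (2 ^ j)) -Nat.lxor_assoc.
  rewrite -(flip_cube_of_nat _ (Ordinal j_lt)) flipE.
  by apply: saturated_flip_flip z_iso zi_sat _; rewrite -?val_eqE.
Qed.

(** * A binomial estimate *)

Lemma sum_bin n : \sum_(i < n.+1) 'C(n, i) = 2 ^ n.
Proof.
by rewrite -[2]/(1 + 1) expnDn; apply: eq_bigr => i _; rewrite !exp1n !muln1.
Qed.

Lemma sum_bin_odd n k :
  \sum_(1 <= i < k.+1) 'C(n.+1, 2 * i - 1) = \sum_(0 <= j < 2 * k) 'C(n, j).
Proof.
elim: k => [|k IHk]; first by rewrite !big_geq.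
rewrite big_nat_recr // IHk (_ : 2 * k.+1 = (2 * k).+2); last lia.
by rewrite subSS subn0 !big_nat_recr //= binS; lia.
Qed.

Lemma sum_bin_half r :
  2 * \sum_(0 <= j < r.+1) 'C(2 * r, j) = 2 ^ (2 * r) + 'C(2 * r, r).
Proof.
have sum_upper : \sum_(r.+1 <= j < (2 * r).+1) 'C(2 * r, j) = \sum_(0 <= j < r) 'C(2 * r, j).
  rewrite -{1}[r.+1]add0n big_addn (_ : (2 * r).+1 - r.+1 = r); last lia.
  rewrite (big_nat_rev _ _ 0) /=; apply: eq_big_nat => j /andP[_ j_lt].
  by rewrite -bin_sub; [congr 'C(_, _) |]; lia.
have r_le : r.+1 <= (2 * r).+1 by lia.
rewrite -sum_bin -(big_mkord xpredT) (big_cat_nat (leq0n r.+1) r_le) sum_upper.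
by rewrite big_nat_recr //=; lia.
Qed.

Lemma bin_central_le r : 0 < r -> 2 * 'C(2 * r, r) <= 2 ^ (2 * r).
Proof.
case: r => // m _; rewrite (_ : 2 * m.+1 = (2 * m).+2); last lia.
rewrite binS expnS leq_mul2l /= -sum_bin.
have m_lt : m < (2 * m).+2 by lia.
have m1_lt : m.+1 < (2 * m).+2 by lia.
rewrite (bigD1 (Ordinal m_lt)) // (bigD1 (Ordinal m1_lt)) /=; first lia.
by rewrite -val_eqE /= (gtn_eqF (ltnSn m)).
Qed.

Lemma sum_bin_odd_le k : 0 < k ->
  32 * \sum_(1 <= i < k.+1) 'C(4 * k - 1, 2 * i - 1) <= 7 * 2 ^ (4 * k).
Proof.
move=> k_gt0; have [r kr] : exists r, 2 * k = r.+1 by exists (2 * k).-1; lia.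
rewrite (_ : 4 * k - 1 = (2 * r).+1); last lia.
rewrite sum_bin_odd kr (_ : 4 * k = 2 + 2 * r); last lia.
rewrite expnD (_ : 2 ^ 2 = 4) //.
have r_gt0 : 0 < r by lia.
by have := sum_bin_half r; have := bin_central_le r_gt0; lia.
Qed.

(** * Lower bounds and the three values *)

Lemma alpha_od_Q4_ge : 6 <= alpha_od_Q 4.
Proof.
have := @odd_independent_code_alpha_od 4 (fun v => weight 4 v == 2) ltac:(by vm_compute).
by rewrite (_ : count _ _ = 6) //; vm_compute.
Qed.

(* The even-weight words outside the extended Hamming code [8, 4, 4]: a word of
   even weight is a codeword iff the XOR of the indices of its 1-bits is 0. *)
Definition Q8_code v :=
  ~~ odd (weight 8 v) && (foldr Nat.lxor 0 [seq i <- iota 0 8 | Nat.testbit v i] != 0).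

Lemma alpha_od_Q8_ge : 112 <= alpha_od_Q 8.
Proof.
have := @odd_independent_code_alpha_od 8 Q8_code ltac:(by vm_compute).
by rewrite (_ : count _ _ = 112) //; vm_compute.
Qed.

Lemma alpha_od_Q4 : alpha_od_Q 4 = 6.
Proof.
apply/eqP; rewrite eqn_leq alpha_od_Q4_ge andbT.
by have := @alpha_od_Q_le 4 isT isT; lia.
Qed.

Lemma alpha_od_Q8 : alpha_od_Q 8 = 112.
Proof.
apply/eqP; rewrite eqn_leq alpha_od_Q8_ge andbT.
by have := @alpha_od_Q_le 8 isT isT; lia.
Qed.

Lemma alpha_od_Q6 : alpha_od_Q 6 = 24.
Proof.
apply/eqP; rewrite eqn_leq; apply/andP; split.
  exact/alpha_od_le/card_odd_independent_Q6_le.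
by have := @alpha_od_Q_lift 4 isT; rewrite alpha_od_Q4.
Qed.

Lemma alpha_od_Q_even_ge d : ~~ odd d -> 8 <= d -> 7 * 2 ^ d <= 16 * alpha_od_Q d.
Proof.
move=> d_even d_ge8; have [m ->] : exists m, d = 8 + 2 * m.
  by exists (d - 8)./2; move: (odd_double_half (d - 8)); rewrite oddB // (negbTE d_even); lia.
elim: m => [|m IHm]; first by rewrite alpha_od_Q8.
have := @alpha_od_Q_lift (8 + 2 * m) isT.
rewrite (_ : 8 + 2 * m + 2 = 8 + 2 * m.+1); last lia.
rewrite (_ : 8 + 2 * m.+1 = 2 + (8 + 2 * m)) 1?expnD; last lia.
by move: IHm; rewrite (_ : 2 ^ 2 = 4) //; lia.
Qed.

Theorem proposition14 :
  (forall k : nat, 1 <= k ->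
     2 * (\sum_(1 <= i < k.+1) 'C(4 * k - 1, 2 * i - 1)) <= alpha_od_Q (4 * k))
  /\ (alpha_od_Q 4 = 6 /\ alpha_od_Q 6 = 24 /\ alpha_od_Q 8 = 112)
  /\ (forall d : nat, ~~ odd d -> 8 <= d -> 7 * 2 ^ d <= 16 * alpha_od_Q d).
Proof.
split; last first.
  split; last exact: alpha_od_Q_even_ge.
  by rewrite alpha_od_Q4 alpha_od_Q6 alpha_od_Q8.
move=> k k_gt0; have [k_lt2 | k_ge2] := ltnP k 2.
  by rewrite (_ : k = 1) ?big_nat1 ?alpha_od_Q4 //; lia.
have := sum_bin_odd_le k_gt0.
have := @alpha_od_Q_even_ge (4 * k); rewrite oddM /= => /(_ isT ltac:(lia)).
lia.
Qed.
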